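(* Let $G$ be a simple connected graph with $n$ vertices and $m$ edges, let $k\ge1$ be an integer, and let $S_{2k}(G)$ be the $2k$-parallel subdivision graph of $G$. If $\zeta\notin\{\frac12,\frac32\}$ is an eigenvalue of $\mathscr{L}(S_{2k}(G))$, then $\zeta(4\zeta^2-12\zeta+9)$ is an eigenvalue of $\mathscr{L}(G)$, and its multiplicity is the same as that of $\zeta$.
   Context: For a graph $H$ with adjacency matrix $A(H)$ and diagonal degree matrix $D(H)$ (no isolated vertices), the normalized Laplacian is $\mathscr{L}(H)=I-D(H)^{-1/2}A(H)D(H)^{-1/2}$. The $2k$-parallel subdivision graph $S_{2k}(G)$ is obtained from $G$ by replacing each edge $uv$ of $G$ by $k$ internally disjoint paths $u-w_1-w_2-v$ of length $3$ (each with its own two new internal vertices). *)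

From HB Require Import structures.
From mathcomp Require Import all_boot all_order all_algebra.
Set Implicit Arguments. Unset Strict Implicit. Unset Printing Implicit Defensive.
Import Order.TTheory GRing.Theory Num.Theory.
Local Open Scope ring_scope.

(* A simple graph on a finite vertex type T is a symmetric irreflexive
   relation r : rel T.  Matrices are indexed by 'I_#|T| via enum_val. *)

Section NormLap.
Variable R : rcfType.
Variable T : finType.
Variable r : rel T.

Definition gdeg (x : T) : nat := #|[set y | r x y]|.

Definition adjmx : 'M[R]_#|T| :=
  \matrix_(i, j) (r (enum_val i) (enum_val j))%:R.

Definition degmx_invsqrt : 'M[R]_#|T| :=
  diag_mx (\row_i (Num.sqrt ((gdeg (enum_val i))%:R : R))^-1).

Definition nlap : 'M[R]_#|T| :=
  1%:M - degmx_invsqrt *m adjmx *m degmx_invsqrt.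
End NormLap.

(* New (internal) vertices are pairs (d, i) where d = (u, v) is an ORIENTED
   edge (e u v) and i : 'I_k.  For each unordered edge {u,v} and each i < k,
   the path  u - w_{(u,v),i} - w_{(v,u),i} - v  is added; thus each edge is
   replaced by k internally disjoint paths of length 3 with two fresh
   internal vertices each. *)
Definition sdv_int (V : finType) (e : rel V) (k : nat) : finType :=
  ({d : V * V | e d.1 d.2} * 'I_k)%type.

Definition sdv_vert (V : finType) (e : rel V) (k : nat) : finType :=
  (V + sdv_int e k)%type.

Definition sdv_adj (V : finType) (e : rel V) (k : nat) : rel (sdv_vert e k) :=
  fun x y =>
    match x, y with
    | inl u, inl v => false
    | inl u, inr w => (val w.1).1 == u
    | inr w, inl u => (val w.1).1 == u
    | inr w1, inr w2 =>
        [&& w1.2 == w2.2, (val w2.1).1 == (val w1.1).2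
          & (val w2.1).2 == (val w1.1).1]
    end.

From HB Require Import structures.
From mathcomp Require Import all_boot all_order all_algebra.
From mathcomp Require Import ring.
Set Implicit Arguments. Unset Strict Implicit. Unset Printing Implicit Defensive.
Import Order.TTheory GRing.Theory Num.Theory.
Local Open Scope ring_scope.

(* Put y = D^-1/2 x: x is a zeta-eigenvector of L(H) iff y is an eigenfunction
   of the random walk, sum_(s ~ t) y s = mu * deg t * y t, with mu = 1 - zeta.
   On S_2k(G) the two inner vertices w, w' of a path u - w - w' - v satisfy
   2 mu y w = y u + y w' and 2 mu y w' = y v + y w, so when 4 mu^2 <> 1
   (i.e. zeta <> 1/2, 3/2) y w = (2 mu y u + y v) / (4 mu^2 - 1).  Summing
   at u shows that y restricted to V is a walk eigenfunction of G for the
   Chebyshev value T_3(mu) = 4 mu^3 - 3 mu, and 1 - T_3(1 - zeta) is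
   zeta (4 zeta^2 - 12 zeta + 9).  Restriction and the extension above are
   inverse linear maps between the two eigenspaces. *)

Lemma sumr_delta_r (R : pzSemiRingType) (T : finType) (a : T) (g : T -> R) :
  \sum_t g t * (t == a)%:R = g a.
Proof.
rewrite (bigD1 a) //= eqxx mulr1 big1 ?addr0 // => t /negbTE ->.
by rewrite mulr0.
Qed.

Lemma sumr_delta_l (R : pzSemiRingType) (T : finType) (a : T) (g : T -> R) :
  \sum_t (a == t)%:R * g t = g a.
Proof.
rewrite (bigD1 a) //= eqxx mul1r big1 ?addr0 // => t.
by rewrite eq_sym => /negbTE ->; rewrite mul0r.
Qed.

Lemma connected_gdeg_gt0 (T : finType) (r : rel T) :
  (forall x y, connect r x y) -> (1 < #|T|)%N -> forall v, (0 < gdeg r v)%N.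
Proof.
move=> r_conn /card_gt1P[x [y [_ _ xy]]] v.
have [w wv] : exists w, w != v.
  by case: (eqVneq x v) => [<-|xv]; [exists y; rewrite eq_sym | exists x].
case/connectP: (r_conn v w) => -[/= _ wE | z p /= /andP[vz _] _].
  by rewrite wE eqxx in wv.
by rewrite /gdeg card_gt0; apply/set0Pn; exists z; rewrite inE.
Qed.

Section NormalizedLaplacian.
Variable R : rcfType.

Section WalkEigen.
Variables (T : finType) (r : rel T).

Definition degr (t : T) : R := (gdeg r t)%:R.
Definition sqrt_deg (t : T) : R := Num.sqrt (degr t).
Definition dscale (u : 'rV[R]_#|T|) (t : T) : R :=
  (sqrt_deg t)^-1 * u 0 (enum_rank t).
Definition walk_eigenfun (m : R) (y : T -> R) :=
  forall t, \sum_s (r s t)%:R * y s = m * degr t * y t.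

Lemma eq_walk_eigenfun m (y1 y2 : T -> R) :
  y1 =1 y2 -> walk_eigenfun m y1 -> walk_eigenfun m y2.
Proof.
by move=> E H t; rewrite -E -(H t); apply: eq_bigr => s _; rewrite E.
Qed.

Lemma degr_sum t : degr t = \sum_s (r t s)%:R.
Proof.
rewrite /degr /gdeg -sum1_card natr_sum big_mkcond /=.
by apply: eq_bigr => s _; rewrite inE; case: (r t s).
Qed.

Lemma degr_sum_sym t : symmetric r -> degr t = \sum_s (r s t)%:R.
Proof.
by move=> r_sym; rewrite degr_sum; apply: eq_bigr => s _; rewrite r_sym.
Qed.

Lemma nlap_mul_entry (u : 'rV[R]_#|T|) t :
  (u *m nlap R r) 0 (enum_rank t) =
  u 0 (enum_rank t) - (sqrt_deg t)^-1 * \sum_s (r s t)%:R * dscale u s.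
Proof.
rewrite /nlap mulmxBr mulmx1 [LHS]mxE [X in _ + X]mxE; congr (_ - _).
rewrite /degmx_invsqrt mul_mx_diag mul_diag_mx mxE mulr_sumr.
rewrite (big_enum_val (A := T)) /=; apply: eq_bigr => i _.
by rewrite !mxE /dscale enum_valK enum_rankK /sqrt_deg /degr; ring.
Qed.

Hypothesis gdeg_gt0 : forall t, (0 < gdeg r t)%N.

Lemma sqrt_deg_neq0 t : sqrt_deg t != 0.
Proof. by rewrite gt_eqF // sqrtr_gt0 /degr ltr0n. Qed.

Lemma sqrt_degM t : sqrt_deg t * sqrt_deg t = degr t.
Proof. by rewrite -expr2 sqr_sqrtr // /degr ler0n. Qed.

Lemma nlap_eigenspaceP (z : R) (u : 'rV[R]_#|T|) :
  (u <= eigenspace (nlap R r) z)%MS <-> walk_eigenfun (1 - z) (dscale u).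
Proof.
have sqrt_neq0 := sqrt_deg_neq0.
split=> [/eigenspaceP/rowP H t | H].
  move: (H (enum_rank t)); rewrite nlap_mul_entry mxE -sqrt_degM /dscale.
  set X := \sum_s _ => Hu.
  have -> : X = sqrt_deg t * (u 0 (enum_rank t) - z * u 0 (enum_rank t)).
    by rewrite -Hu; field.
  by field.
apply/eigenspaceP/rowP => j.
by rewrite -(enum_valK j) nlap_mul_entry mxE H -sqrt_degM /dscale; field.
Qed.

Lemma dscale_inj (u v : 'rV[R]_#|T|) : dscale u =1 dscale v -> u = v.
Proof.
move=> H; apply/rowP => j; move: (H (enum_val j)); rewrite /dscale enum_valK.
by apply: mulfI; rewrite invr_eq0 sqrt_deg_neq0.
Qed.

End WalkEigen.

Section DegreeConjugation.
Variables (T1 T2 : finType) (r1 : rel T1) (r2 : rel T2).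

Definition dconj_mx (K : T1 -> T2 -> R) : 'M[R]_(#|T1|, #|T2|) :=
  \matrix_(i, j) ((sqrt_deg r1 (enum_val i))^-1 * K (enum_val i) (enum_val j)
                   * sqrt_deg r2 (enum_val j)).

Lemma dscale_mul_dconj K (u : 'rV[R]_#|T1|) t2 :
  sqrt_deg r2 t2 != 0 ->
  dscale r2 (u *m dconj_mx K) t2 = \sum_t1 dscale r1 u t1 * K t1 t2.
Proof.
move=> hs; rewrite /dscale mxE mulr_sumr (big_enum_val (A := T1)) /=.
apply: eq_bigr => i _; rewrite mxE enum_valK enum_rankK.
by set a := (sqrt_deg r1 _)^-1; field.
Qed.

End DegreeConjugation.

Lemma mxrank_leq_retract (F : fieldType) n1 n2 m1 m2
    (E : 'M[F]_(m1, n1)) (E' : 'M[F]_(m2, n2))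
    (P : 'M[F]_(n1, n2)) (Q : 'M[F]_(n2, n1)) :
  (forall u : 'rV_n1, (u <= E)%MS -> (u *m P <= E')%MS /\ u *m P *m Q = u) ->
  (\rank E <= \rank E')%N.
Proof.
move=> H.
have sEPE' : (E *m P <= E')%MS.
  by apply/row_subP => i; rewrite row_mul; exact: (H _ (row_sub i E)).1.
have EPQ : E *m P *m Q = E.
  by apply/row_matrixP => i; rewrite !row_mul; exact: (H _ (row_sub i E)).2.
by rewrite -{1}EPQ; apply: leq_trans (mxrankM_maxl _ _) (mxrankS sEPE').
Qed.

Section Subdivision.
Variables (V : finType) (e : rel V) (k : nat).
Hypothesis e_sym : symmetric e.

Local Notation S := (sdv_vert e k).
Local Notation rS := (@sdv_adj V e k).
Local Notation arc := {d : V * V | e d.1 d.2}.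

Definition arc_rev (d : arc) : arc :=
  exist (fun p => e p.1 p.2) ((val d).2, (val d).1)
        (etrans (e_sym _ _) (valP d)).

Definition inner_rev (w : sdv_int e k) : sdv_int e k := (arc_rev w.1, w.2).

Lemma inner_revK : involutive inner_rev.
Proof. by case=> [[[a b] h] i]; congr pair; apply: val_inj. Qed.

Lemma sdv_adj_sym : symmetric rS.
Proof.
case=> [u|[[[a b] h] i]] [v|[[[a' b'] h'] i']] //=.
by rewrite [i == _]eq_sym [a' == _]eq_sym [b' == _]eq_sym [(b == a') && _]andbC.
Qed.

Lemma sdv_adj_inner w' w : rS (inr w') (inr w) = (w' == inner_rev w).
Proof.
case: w w' => [[[a b] h] i] [[[a' b'] h'] i'] /=.
apply/and3P/eqP => [[/eqP Ei /eqP Ea /eqP Eb]|E].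
  by congr pair => //; apply: val_inj; rewrite /= Ea Eb.
have E1 := congr1 (fun w : sdv_int e k => val w.1) E.
have E2 := congr1 snd E; rewrite /= in E1 E2; case: E1 => -> ->.
by rewrite E2 !eqxx.
Qed.

Lemma big_sdv_vert (F : S -> R) :
  \sum_s F s = \sum_v F (inl v) + \sum_(w : sdv_int e k) F (inr w).
Proof. exact: big_sumType. Qed.

Lemma sum_nbr_outer u (f : S -> R) :
  \sum_s (rS s (inl u))%:R * f s =
  \sum_(w : sdv_int e k) ((val w.1).1 == u)%:R * f (inr w).
Proof. by rewrite big_sdv_vert big1 ?add0r // => v _; rewrite mul0r. Qed.

Lemma sum_nbr_inner w (f : S -> R) :
  \sum_s (rS s (inr w))%:R * f s = f (inl (val w.1).1) + f (inr (inner_rev w)).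
Proof.
rewrite big_sdv_vert sumr_delta_l.
rewrite -(sumr_delta_r (inner_rev w) (fun w' => f (inr w'))).
by congr (_ + _); apply: eq_bigr => w' _; rewrite sdv_adj_inner mulrC.
Qed.

Lemma sum_arc (G : V * V -> R) :
  \sum_(d : arc) G (val d) = \sum_(p | e p.1 p.2) G p.
Proof.
rewrite (reindex_omap (val : arc -> V * V) insub); last first.
  by move=> p hp; rewrite insubT.
by apply: eq_bigl => d; rewrite (valP d) valK eqxx.
Qed.

Lemma sum_arc_from u (G : V -> V -> R) :
  \sum_(d : arc) ((val d).1 == u)%:R * G (val d).1 (val d).2 =
  \sum_v (e u v)%:R * G u v.
Proof.
rewrite (sum_arc (fun p => (p.1 == u)%:R * G p.1 p.2)).
rewrite -(pair_big_dep xpredT e (fun a b => (a == u)%:R * G a b)) /=.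
rewrite (bigD1 u) //= [X in _ + X]big1 ?addr0; last first.
  by move=> a /negbTE hau; apply: big1 => b _; rewrite hau mul0r.
rewrite big_mkcond /=; apply: eq_bigr => v _; rewrite eqxx mul1r.
by case: (e u v); rewrite ?mul1r ?mul0r.
Qed.

Lemma sum_inner_from u (G : V -> V -> R) :
  \sum_(w : sdv_int e k) ((val w.1).1 == u)%:R * G (val w.1).1 (val w.1).2 =
  k%:R * \sum_v (e u v)%:R * G u v.
Proof.
rewrite -(pair_bigA _ (fun (d : arc) (i : 'I_k) =>
  ((val d).1 == u)%:R * G (val d).1 (val d).2)) /=.
rewrite -sum_arc_from mulr_sumr; apply: eq_bigr => d _.
by rewrite big_const_ord iter_addr addr0 [RHS]mulr_natl.
Qed.

Lemma degr_sdv_outer u : degr rS (inl u) = k%:R * degr e u.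
Proof.
rewrite !degr_sum_sym //; last exact: sdv_adj_sym.
under eq_bigr do rewrite -[_%:R]mulr1.
rewrite (sum_nbr_outer u (fun=> 1)) (sum_inner_from u (fun _ _ => 1)).
by congr (_ * _); apply: eq_bigr => v _; rewrite mulr1 e_sym.
Qed.

Lemma degr_sdv_inner w : degr rS (inr w) = 2.
Proof.
rewrite degr_sum_sym; last exact: sdv_adj_sym.
under eq_bigr do rewrite -[_%:R]mulr1.
by rewrite (sum_nbr_inner w (fun=> 1)).
Qed.

Section Eigenfunctions.
Variable mu : R.
Local Notation c := (4 * mu ^+ 2 - 1).
Hypothesis c_neq0 : c != 0.

Definition sdv_ext (y : V -> R) (s : S) : R :=
  match s with
  | inl v => y v
  | inr w => (2 * mu * y (val w.1).1 + y (val w.1).2) / c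
  end.

Lemma sum_nbr_outer_ext u (y : V -> R) :
  \sum_s (rS s (inl u))%:R * sdv_ext y s =
  k%:R * (2 * mu * degr e u * y u + \sum_v (e v u)%:R * y v) / c.
Proof.
rewrite sum_nbr_outer /=.
rewrite (sum_inner_from u (fun a b => (2 * mu * y a + y b) / c)).
rewrite (degr_sum_sym _ e_sym) -[RHS]mulrA; congr (_ * _).
rewrite mulr_sumr mulr_suml -big_split mulr_suml; apply: eq_bigr => v _.
by rewrite /= [e v u]e_sym; field.
Qed.

Lemma walk_eigenfun_sdvE y :
  walk_eigenfun rS mu y -> y =1 sdv_ext (y \o inl).
Proof.
move=> Hy [v //|w] /=.
have := Hy (inr w); have := Hy (inr (inner_rev w)).
rewrite !sum_nbr_inner !degr_sdv_inner inner_revK /=.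
set yv := y (inl _); set yu := y (inl _); set yw := y (inr w).
set yw' := y (inr _) => Hv Hu.
have -> : yu = mu * 2 * yw - yw' by rewrite -Hu; ring.
have -> : yv = mu * 2 * yw' - yw by rewrite -Hv; ring.
by field.
Qed.

Hypothesis k_neq0 : k%:R != 0 :> R.

Lemma walk_eigenfun_sdv_restrict y :
  walk_eigenfun rS mu y -> walk_eigenfun e (4 * mu ^+ 3 - 3 * mu) (y \o inl).
Proof.
move=> Hy u; have := Hy (inl u).
rewrite (eq_bigr _ (fun s _ => congr1 _ (walk_eigenfun_sdvE Hy s))).
rewrite sum_nbr_outer_ext degr_sdv_outer /=.
set Y := \sum_v _ => HY.
have -> : Y = c / k%:R * (k%:R * (2 * mu * degr e u * y (inl u) + Y) / c)
              - 2 * mu * degr e u * y (inl u).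
  by field; rewrite c_neq0 k_neq0.
by rewrite HY; field.
Qed.

Lemma walk_eigenfun_sdv_ext y :
  walk_eigenfun e (4 * mu ^+ 3 - 3 * mu) y -> walk_eigenfun rS mu (sdv_ext y).
Proof.
move=> Hy [u|w].
  by rewrite sum_nbr_outer_ext Hy degr_sdv_outer /=; field.
by rewrite sum_nbr_inner degr_sdv_inner /=; field.
Qed.

End Eigenfunctions.

Hypothesis k_gt0 : (0 < k)%N.
Hypothesis gdeg_gt0 : forall v, (0 < gdeg e v)%N.

Lemma sdv_gdeg_gt0 s : (0 < gdeg rS s)%N.
Proof.
case: s => [u|w].
  have /eqP := degr_sdv_outer u; rewrite /degr -natrM eqr_nat => /eqP ->.
  by rewrite muln_gt0 k_gt0 gdeg_gt0.
by have /eqP := degr_sdv_inner w; rewrite /degr eqr_nat => /eqP ->.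
Qed.

Variable zeta : R.
Local Notation mu := (1 - zeta).
Local Notation c := (4 * mu ^+ 2 - 1).
Hypothesis c_neq0 : c != 0.

Lemma chebyshev3_shift :
  1 - zeta * (4 * zeta ^+ 2 - 12 * zeta + 9) = 4 * mu ^+ 3 - 3 * mu.
Proof. by ring. Qed.

Definition restrict_mx := dconj_mx rS e (fun s v => (s == inl v)%:R).
Definition extend_mx :=
  dconj_mx e rS (fun t => sdv_ext mu (fun v => (t == v)%:R)).

Lemma dscale_restrict u v : dscale e (u *m restrict_mx) v = dscale rS u (inl v).
Proof. by rewrite dscale_mul_dconj ?sqrt_deg_neq0 // sumr_delta_r. Qed.

Lemma dscale_extend x s :
  dscale rS (x *m extend_mx) s = sdv_ext mu (dscale e x) s.
Proof.
rewrite dscale_mul_dconj ?sqrt_deg_neq0 //; last exact: sdv_gdeg_gt0.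
case: s => [v|w] /=; first exact: sumr_delta_r.
rewrite (eq_bigr (fun t => 2 * mu / c * (dscale e x t * (t == (val w.1).1)%:R)
                       + c^-1 * (dscale e x t * (t == (val w.1).2)%:R))).
  by rewrite big_split /= -!mulr_sumr !sumr_delta_r; field.
by move=> t _; field.
Qed.

Local Notation L_S := (nlap R rS).
Local Notation L_G := (nlap R e).
Local Notation zeta' := (zeta * (4 * zeta ^+ 2 - 12 * zeta + 9)).

Lemma restrict_eigenspace (u : 'rV[R]_#|S|) : (u <= eigenspace L_S zeta)%MS ->
  (u *m restrict_mx <= eigenspace L_G zeta')%MS /\
  u *m restrict_mx *m extend_mx = u.
Proof.
move/(nlap_eigenspaceP sdv_gdeg_gt0) => Hu; split.
  have k_neq0 : k%:R != 0 :> R by rewrite pnatr_eq0 -lt0n.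
  apply/(nlap_eigenspaceP gdeg_gt0); rewrite chebyshev3_shift.
  apply: eq_walk_eigenfun (walk_eigenfun_sdv_restrict c_neq0 k_neq0 Hu) => v.
  by rewrite dscale_restrict.
apply: (dscale_inj sdv_gdeg_gt0) => s.
rewrite dscale_extend (walk_eigenfun_sdvE c_neq0 Hu s) /=.
by case: s => [v|w] /=; rewrite !dscale_restrict.
Qed.

Lemma extend_eigenspace (x : 'rV[R]_#|V|) : (x <= eigenspace L_G zeta')%MS ->
  (x *m extend_mx <= eigenspace L_S zeta)%MS /\
  x *m extend_mx *m restrict_mx = x.
Proof.
move/(nlap_eigenspaceP gdeg_gt0); rewrite chebyshev3_shift => Hx; split.
  apply/(nlap_eigenspaceP sdv_gdeg_gt0).
  apply: eq_walk_eigenfun (walk_eigenfun_sdv_ext c_neq0 Hx) => s.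
  by rewrite dscale_extend.
by apply: (dscale_inj gdeg_gt0) => v; rewrite dscale_restrict dscale_extend.
Qed.

Lemma sdv_eigenspace_rank :
  \rank (eigenspace L_S zeta) = \rank (eigenspace L_G zeta').
Proof.
by apply/eqP; rewrite eqn_leq !(mxrank_leq_retract restrict_eigenspace,
                                mxrank_leq_retract extend_eigenspace).
Qed.

End Subdivision.
End NormalizedLaplacian.

Lemma sdv_denom_neq0 (R : numFieldType) (zeta : R) :
  zeta != 1 / 2 -> zeta != 3 / 2 -> 4 * (1 - zeta) ^+ 2 - 1 != 0.
Proof.
move=> z_n12 z_n32.
have -> : 4 * (1 - zeta) ^+ 2 - 1 = 4 * ((zeta - 1 / 2) * (zeta - 3 / 2)).
  by field.
by rewrite !mulf_neq0 ?subr_eq0 ?pnatr_eq0.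
Qed.

Theorem lemma3p2 (R : rcfType) (V : finType) (e : rel V) (k : nat) :
  symmetric e -> irreflexive e ->
  (forall x y : V, connect e x y) -> (1 < #|V|)%N -> (1 <= k)%N ->
  forall zeta : R, zeta != 1 / 2 -> zeta != 3 / 2 ->
  eigenvalue (nlap R (@sdv_adj V e k)) zeta ->
  eigenvalue (nlap R e) (zeta * (4 * zeta ^+ 2 - 12 * zeta + 9)) /\
  \rank (eigenspace (nlap R (@sdv_adj V e k)) zeta) =
  \rank (eigenspace (nlap R e) (zeta * (4 * zeta ^+ 2 - 12 * zeta + 9))).
Proof.
move=> e_sym _ e_conn V_gt1 k_gt0 zeta z_n12 z_n32 ev.
have gdeg_gt0 := connected_gdeg_gt0 e_conn V_gt1.
have c_neq0 := sdv_denom_neq0 z_n12 z_n32.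
have rank_eq := sdv_eigenspace_rank e_sym k_gt0 gdeg_gt0 c_neq0.
by split=> //; move: ev; rewrite /eigenvalue -!mxrank_eq0 rank_eq.
Qed.
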